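(* (1) For every finitely complete category $\mathbb E$, any internal unitary magma in $\mathbb E$ that carries an internal opimplicative subtraction structure in the category of internal unitary magmas is isomorphic to the terminal object; the same holds for internal implicative opsubtractions. (2) If $X$ is a topological space with a continuous binary operation $s$ and a point $0$ satisfying the opimplicative subtraction identities (resp. the implicative opsubtraction identities), then $\pi_1(X,0)$ is trivial. (3) If $X$ is a topological space with a continuous ternary operation $p$ satisfying $p(x,y,y)=x=p(y,y,x)$ and the Pixley identity $p(x,y,x)=x$, then $\pi_1(X,x_0)$ is trivial for every point $x_0\in X$.
   Context: An opimplicative subtraction is a set with a binary operation $s$ and a constant $0$ such that $s(x,x)=0$, $s(x,0)=x$ and $s(0,x)=0$. An implicative opsubtraction is a set with a binary operation $s$ and constant $0$ such that $s(x,x)=0$, $s(0,x)=x$ and $s(x,0)=0$. A unitary magma is a set with binary operation $*$ and constant $1$ with $x*1=x=1*x$. Internal structures in a finitely complete category are defined diagrammatically via finite products. *)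

From Stdlib Require Import ProofIrrelevance.
From HB Require Import structures.
From mathcomp Require Import all_boot all_order all_algebra.
From mathcomp Require Import all_classical all_reals topology.
From mathcomp Require Import Rstruct Rstruct_topology.

Set Implicit Arguments.
Unset Strict Implicit.
Unset Printing Implicit Defensive.

Record Category := {
  ob :> Type;
  hom : ob -> ob -> Type;
  cat_id : forall A, hom A A;
  comp : forall A B D, hom B D -> hom A B -> hom A D;
  comp_id_l : forall A B (f : hom A B), comp (cat_id B) f = f;
  comp_id_r : forall A B (f : hom A B), comp f (cat_id A) = f;
  comp_assoc : forall A B C D (f : hom A B) (g : hom B C) (h : hom C D),
      comp h (comp g f) = comp (comp h g) f
}.

Arguments cat_id {c} A.
Arguments comp {c A B D}.
Notation "g ⊙ f" := (comp g f) (at level 40, left associativity).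

Definition cat_isomorphic (C : Category) (A B : C) : Prop :=
  exists (f : hom A B) (g : hom B A), g ⊙ f = cat_id A /\ f ⊙ g = cat_id B.

Definition is_terminal (C : Category) (T : C) : Prop :=
  forall X : C, exists t : hom X T, forall t' : hom X T, t' = t.

Definition is_product (C : Category) (A B P : C) (p1 : hom P A) (p2 : hom P B)
  : Prop :=
  forall (X : C) (f : hom X A) (g : hom X B),
    exists h : hom X P, (p1 ⊙ h = f /\ p2 ⊙ h = g) /\
      forall h' : hom X P, p1 ⊙ h' = f -> p2 ⊙ h' = g -> h' = h.

Record FinComplete (C : Category) := {
  fc_one : C;
  fc_bang : forall X : C, hom X fc_one;
  fc_bang_uniq : forall (X : C) (f : hom X fc_one), f = fc_bang X;
  fc_prod : C -> C -> C;
  fc_pr1 : forall A B : C, hom (fc_prod A B) A;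
  fc_pr2 : forall A B : C, hom (fc_prod A B) B;
  fc_pair : forall (X A B : C), hom X A -> hom X B -> hom X (fc_prod A B);
  fc_pr1_pair : forall X A B (f : hom X A) (g : hom X B), fc_pr1 A B ⊙ fc_pair f g = f;
  fc_pr2_pair : forall X A B (f : hom X A) (g : hom X B), fc_pr2 A B ⊙ fc_pair f g = g;
  fc_pair_uniq : forall X A B (h : hom X (fc_prod A B)),
      h = fc_pair (fc_pr1 A B ⊙ h) (fc_pr2 A B ⊙ h);
  fc_eqz : forall (A B : C), hom A B -> hom A B -> C;
  fc_eqz_m : forall A B (f g : hom A B), hom (fc_eqz f g) A;
  fc_eqz_eq : forall A B (f g : hom A B), f ⊙ fc_eqz_m f g = g ⊙ fc_eqz_m f g;
  fc_eqz_lift : forall A B (f g : hom A B) X (h : hom X A),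
      f ⊙ h = g ⊙ h -> hom X (fc_eqz f g);
  fc_eqz_lift_eq : forall A B (f g : hom A B) X (h : hom X A) (e : f ⊙ h = g ⊙ h),
      fc_eqz_m f g ⊙ fc_eqz_lift e = h;
  fc_eqz_uniq : forall A B (f g : hom A B) X (k k' : hom X (fc_eqz f g)),
      fc_eqz_m f g ⊙ k = fc_eqz_m f g ⊙ k' -> k = k'
}.








Arguments fc_one {C} f0.
Arguments fc_bang {C} f0 X.
Arguments fc_prod {C} f0.
Arguments fc_pr1 {C} f0 {A B}.
Arguments fc_pr2 {C} f0 {A B}.
Arguments fc_pair {C} f0 {X A B}.
Section IUMag.
Variables (E : Category) (F : FinComplete E).

Definition prodmap (A A' B B' : E) (f : hom A B) (g : hom A' B')
  : hom (fc_prod F A A') (fc_prod F B B') :=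
  fc_pair F (f ⊙ fc_pr1 F) (g ⊙ fc_pr2 F).

Record IUMagma := {
  umc :> E;
  umul : hom (fc_prod F umc umc) umc;
  uunit : hom (fc_one F) umc;
  umul_unit_r : umul ⊙ fc_pair F (cat_id umc) (uunit ⊙ fc_bang F umc) = cat_id umc;
  umul_unit_l : umul ⊙ fc_pair F (uunit ⊙ fc_bang F umc) (cat_id umc) = cat_id umc
}.

Record IUMagHom (M N : IUMagma) := {
  umh :> hom M N;
  umh_mul : umh ⊙ umul M = umul N ⊙ prodmap umh umh;
  umh_unit : umh ⊙ uunit M = uunit N
}.

Lemma IIUMagHom_eq (M N : IUMagma) (f g : IUMagHom M N) : umh f = umh g -> f = g.
Proof.
case: f g => f fm fu [g gm gu] /= E0; subst g.
by rewrite (proof_irrelevance _ fm gm) (proof_irrelevance _ fu gu).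
Qed.

Lemma pair_comp (X Y A B : E) (f : hom Y A) (g : hom Y B) (h : hom X Y) :
  fc_pair F f g ⊙ h = fc_pair F (f ⊙ h) (g ⊙ h).
Proof.
rewrite [LHS]fc_pair_uniq !comp_assoc fc_pr1_pair fc_pr2_pair //.
Qed.

Lemma prodmap_comp (A B C : E) (f : hom A B) (g : hom B C) :
  prodmap g g ⊙ prodmap f f = prodmap (g ⊙ f) (g ⊙ f).
Proof.
rewrite /prodmap pair_comp -!comp_assoc fc_pr1_pair fc_pr2_pair.
by rewrite !comp_assoc.
Qed.

Lemma prodmap_id (A : E) : prodmap (cat_id A) (cat_id A) = cat_id (fc_prod F A A).
Proof.
rewrite /prodmap !comp_id_l (fc_pair_uniq (cat_id (fc_prod F A A))) !comp_id_r //.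
Qed.

Definition umag_id (M : IUMagma) : IUMagHom M M.
Proof.
refine (@Build_IUMagHom M M (cat_id M) _ _).
- by rewrite prodmap_id comp_id_l comp_id_r.
- by rewrite comp_id_l.
Defined.

Definition umag_comp (M N P : IUMagma) (g : IUMagHom N P) (f : IUMagHom M N)
  : IUMagHom M P.
Proof.
refine (@Build_IUMagHom M P (umh g ⊙ umh f) _ _).
- rewrite -comp_assoc umh_mul comp_assoc umh_mul -comp_assoc prodmap_comp //.
- by rewrite -comp_assoc umh_unit umh_unit.
Defined.

Definition IUMag : Category.
Proof.
refine (@Build_Category IUMagma IUMagHom umag_id umag_comp _ _ _).
- by move=> A B f; apply: IIUMagHom_eq; rewrite /= comp_id_l.
- by move=> A B f; apply: IIUMagHom_eq; rewrite /= comp_id_r.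
- by move=> A B C D f g h; apply: IIUMagHom_eq; rewrite /= comp_assoc.
Defined.

End IUMag.

(* The induced maps are characterised by their universal properties,   *)
(* so the definition does not depend on the choice of products.        *)

Definition subtraction_laws (C : Category) (A T P : C) (p1 : hom P A)
  (p2 : hom P A) (s : hom P A) (z : hom T A) (opimp : bool) : Prop :=
  forall (t : hom A T),
    (forall d : hom A P, p1 ⊙ d = cat_id A -> p2 ⊙ d = cat_id A -> s ⊙ d = z ⊙ t) /\
    (forall l : hom A P, p1 ⊙ l = cat_id A -> p2 ⊙ l = z ⊙ t ->
        s ⊙ l = (if opimp then cat_id A else z ⊙ t)) /\
    (forall r : hom A P, p1 ⊙ r = z ⊙ t -> p2 ⊙ r = cat_id A ->
        s ⊙ r = (if opimp then z ⊙ t else cat_id A)).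

Definition has_internal_opimplicative_subtraction (C : Category) (A : C) : Prop :=
  exists (T : C) (P : C) (p1 p2 : hom P A) (s : hom P A) (z : hom T A),
    is_terminal T /\ is_product p1 p2 /\ subtraction_laws p1 p2 s z true.

Definition has_internal_implicative_opsubtraction (C : Category) (A : C) : Prop :=
  exists (T : C) (P : C) (p1 p2 : hom P A) (s : hom P A) (z : hom T A),
    is_terminal T /\ is_product p1 p2 /\ subtraction_laws p1 p2 s z false.

Local Open Scope classical_set_scope.
Local Open Scope ring_scope.

Definition unit_interval : set Rdefinitions.R := `[0%R, 1%R]%classic.

Definition is_loop (X : topologicalType) (x0 : X) (g : Rdefinitions.R -> X) : Prop :=
  {within unit_interval, continuous g} /\ g 0%R = x0 /\ g 1%R = x0.

Definition null_homotopic_loop (X : topologicalType) (x0 : X) (g : Rdefinitions.R -> X)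
  : Prop :=
  exists H : Rdefinitions.R * Rdefinitions.R -> X,
    {within unit_interval `*` unit_interval, continuous H} /\
    (forall t, unit_interval t -> H (t, 0%R) = g t) /\
    (forall t, unit_interval t -> H (t, 1%R) = x0) /\
    (forall u, unit_interval u -> H (0%R, u) = x0 /\ H (1%R, u) = x0).

Definition pi1_trivial (X : topologicalType) (x0 : X) : Prop :=
  forall g : Rdefinitions.R -> X, is_loop x0 g -> null_homotopic_loop x0 g.

(* An internal subtraction in the category of unitary magmas is a magma
   morphism s : M x M -> M, and its constant 0 factors through the terminal
   magma, so it is the unit e.  The interchange law then collapses M:
     e = s(x, x) = s(x e, e x) = s(x, e) s(e, x),
   which is x e = x in the opimplicative case and e x = x in the implicative
   one.  Topologically, if s(x, x) = 0, s(x, 0) = x and s(0, x) = 0, then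
   H(t, u) = s(g t, g (t u)) contracts every loop g at 0; an implicative
   opsubtraction becomes such an s after swapping its arguments, and a Pixley
   term p gives s(x, y) = p(x, y, x0). *)

From Pilot Require Import Defs.
From HB Require Import structures.
From mathcomp Require Import all_boot all_order all_algebra.
From mathcomp Require Import all_classical all_reals topology.
From mathcomp Require Import Rstruct Rstruct_topology.
From mathcomp Require Import normedtype.
Import GRing.Theory Num.Theory.

Set Implicit Arguments.
Unset Strict Implicit.
Unset Printing Implicit Defensive.

(* [hom] alone would resolve to the linear maps of mathcomp's vector library. *)
Local Notation hom := Defs.hom.

Section FiniteProducts.
Variables (E : Category) (F : FinComplete E).

Lemma pair_ext (X A B : E) (h k : hom X (fc_prod F A B)) :
  fc_pr1 F ⊙ h = fc_pr1 F ⊙ k -> fc_pr2 F ⊙ h = fc_pr2 F ⊙ k -> h = k.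
Proof. by move=> e1 e2; rewrite (fc_pair_uniq h) (fc_pair_uniq k) e1 e2. Qed.

Lemma pair_pr_id (A B : E) : fc_pair F (fc_pr1 F) (fc_pr2 F) = cat_id (fc_prod F A B).
Proof. by rewrite [RHS]fc_pair_uniq !comp_id_r. Qed.

Lemma prodmap_pair (X A A' B B' : E) (f : hom A B) (g : hom A' B')
    (a : hom X A) (b : hom X A') :
  prodmap F f g ⊙ fc_pair F a b = fc_pair F (f ⊙ a) (g ⊙ b).
Proof. by rewrite /prodmap pair_comp -!comp_assoc fc_pr1_pair fc_pr2_pair. Qed.

Lemma hom_one_eq (X : E) (f g : hom X (fc_one F)) : f = g.
Proof. by rewrite (fc_bang_uniq f) (fc_bang_uniq g). Qed.

Lemma bang_comp (X Y : E) (a : hom X Y) : fc_bang F Y ⊙ a = fc_bang F X.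
Proof. exact: hom_one_eq. Qed.

Lemma iso_one_of_point (X : E) (x : hom (fc_one F) X) :
  x ⊙ fc_bang F X = cat_id X -> cat_isomorphic X (fc_one F).
Proof. by move=> xK; exists (fc_bang F X), x; split; [|exact: hom_one_eq]. Qed.

End FiniteProducts.

Section UnitaryMagmas.
Variables (E : Category) (F : FinComplete E).

Lemma umul_pair_unit_r (M : IUMagma F) (X : E) (a : hom X M) :
  umul M ⊙ fc_pair F a (uunit M ⊙ fc_bang F X) = a.
Proof.
have := f_equal (fun k => k ⊙ a) (umul_unit_r M).
by rewrite /= -comp_assoc pair_comp comp_id_l -comp_assoc bang_comp.
Qed.

Lemma umul_pair_unit_l (M : IUMagma F) (X : E) (a : hom X M) :
  umul M ⊙ fc_pair F (uunit M ⊙ fc_bang F X) a = a.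
Proof.
have := f_equal (fun k => k ⊙ a) (umul_unit_l M).
by rewrite /= -comp_assoc pair_comp comp_id_l -comp_assoc bang_comp.
Qed.

Section ProductMagma.
Variables M N : IUMagma F.

Local Notation MN := (fc_prod F M N).

Definition prod_umul : hom (fc_prod F MN MN) MN :=
  fc_pair F (umul M ⊙ prodmap F (fc_pr1 F) (fc_pr1 F))
            (umul N ⊙ prodmap F (fc_pr2 F) (fc_pr2 F)).

Definition prod_uunit : hom (fc_one F) MN := fc_pair F (uunit M) (uunit N).

Lemma prod_umul_pair (X : E) (a a' : hom X M) (b b' : hom X N) :
  prod_umul ⊙ fc_pair F (fc_pair F a b) (fc_pair F a' b') =
  fc_pair F (umul M ⊙ fc_pair F a a') (umul N ⊙ fc_pair F b b').
Proof.
by apply: pair_ext; rewrite comp_assoc /prod_umul ?fc_pr1_pair ?fc_pr2_pair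
  -comp_assoc prodmap_pair ?fc_pr1_pair ?fc_pr2_pair.
Qed.

Lemma prod_umul_unit_r :
  prod_umul ⊙ fc_pair F (cat_id MN) (prod_uunit ⊙ fc_bang F MN) = cat_id MN.
Proof.
rewrite {1}(fc_pair_uniq (cat_id MN)) /prod_uunit pair_comp prod_umul_pair.
by rewrite !comp_id_r !umul_pair_unit_r pair_pr_id.
Qed.

Lemma prod_umul_unit_l :
  prod_umul ⊙ fc_pair F (prod_uunit ⊙ fc_bang F MN) (cat_id MN) = cat_id MN.
Proof.
rewrite {1}(fc_pair_uniq (cat_id MN)) /prod_uunit pair_comp prod_umul_pair.
by rewrite !comp_id_r !umul_pair_unit_l pair_pr_id.
Qed.

Definition prod_umagma : IUMagma F :=
  Build_IUMagma prod_umul_unit_r prod_umul_unit_l.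

Definition umag_pr1 : IUMagHom prod_umagma M.
Proof.
refine (@Build_IUMagHom _ _ prod_umagma M (fc_pr1 F) _ _).
- by rewrite /= /prod_umul fc_pr1_pair.
- by rewrite /= /prod_uunit fc_pr1_pair.
Defined.

Definition umag_pr2 : IUMagHom prod_umagma N.
Proof.
refine (@Build_IUMagHom _ _ prod_umagma N (fc_pr2 F) _ _).
- by rewrite /= /prod_umul fc_pr2_pair.
- by rewrite /= /prod_uunit fc_pr2_pair.
Defined.

Definition umag_pair (L : IUMagma F) (f : IUMagHom L M) (g : IUMagHom L N) :
  IUMagHom L prod_umagma.
Proof.
refine (@Build_IUMagHom _ _ L prod_umagma (fc_pair F f g) _ _).
- apply: pair_ext; rewrite !comp_assoc ?fc_pr1_pair ?fc_pr2_pair umh_mul /prod_umul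
    ?fc_pr1_pair ?fc_pr2_pair -comp_assoc prodmap_comp ?fc_pr1_pair ?fc_pr2_pair //.
- by rewrite pair_comp !umh_unit.
Defined.

Lemma umag_pr1_pair (L : IUMagma F) (f : IUMagHom L M) (g : IUMagHom L N) :
  umag_comp umag_pr1 (umag_pair f g) = f.
Proof. by apply: IIUMagHom_eq; rewrite /= fc_pr1_pair. Qed.

Lemma umag_pr2_pair (L : IUMagma F) (f : IUMagHom L M) (g : IUMagHom L N) :
  umag_comp umag_pr2 (umag_pair f g) = g.
Proof. by apply: IIUMagHom_eq; rewrite /= fc_pr2_pair. Qed.

Lemma umag_hom_interchange (L : IUMagma F) (s : IUMagHom prod_umagma L) (X : E)
    (a a' : hom X M) (b b' : hom X N) :
  s ⊙ fc_pair F (umul M ⊙ fc_pair F a a') (umul N ⊙ fc_pair F b b') =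
  umul L ⊙ fc_pair F (s ⊙ fc_pair F a b) (s ⊙ fc_pair F a' b').
Proof.
by rewrite -prod_umul_pair comp_assoc (umh_mul s) -comp_assoc prodmap_pair.
Qed.

End ProductMagma.

Definition one_umagma : IUMagma F.
Proof.
by refine (@Build_IUMagma E F (fc_one F) (fc_bang F _) (cat_id _) _ _);
  apply: hom_one_eq.
Defined.

Definition umag_bang (N : IUMagma F) : IUMagHom N one_umagma :=
  @Build_IUMagHom E F N one_umagma (fc_bang F N) (hom_one_eq _ _) (hom_one_eq _ _).

Lemma umag_hom_through_terminal (N T M : IUMagma F)
    (t : IUMagHom N T) (z : IUMagHom T M) :
  is_terminal (C := IUMag F) T -> umh z ⊙ umh t = uunit M ⊙ fc_bang F N.
Proof.
move=> T_terminal.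
have [u _] := T_terminal one_umagma.
have [w wE] := T_terminal T.
have uK : umh u ⊙ fc_bang F T = cat_id T.
  by have := f_equal (@umh _ _ _ _)
    (etrans (wE (umag_comp u (umag_bang T))) (esym (wE (umag_id T)))).
have zu : umh z ⊙ umh u = uunit M.
  by have := umh_unit (umag_comp z u); rewrite /= comp_id_r.
by rewrite -[umh z]comp_id_r -uK comp_assoc zu -comp_assoc bang_comp.
Qed.

Section InternalSubtraction.
Variables (M : IUMagma F) (b : bool).

Local Notation eps := (uunit M ⊙ fc_bang F M).

Lemma umag_subtraction_trivial (s : IUMagHom (prod_umagma M M) M) :
  s ⊙ fc_pair F (cat_id M) (cat_id M) = eps ->
  s ⊙ fc_pair F (cat_id M) eps = (if b then cat_id M else eps) ->
  s ⊙ fc_pair F eps (cat_id M) = (if b then eps else cat_id M) ->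
  eps = cat_id M.
Proof.
move=> s_diag s_l s_r.
have id_split : fc_pair F (cat_id M) (cat_id M) =
    fc_pair F (umul M ⊙ fc_pair F (cat_id M) eps) (umul M ⊙ fc_pair F eps (cat_id M)).
  by rewrite umul_pair_unit_r umul_pair_unit_l.
rewrite -s_diag id_split umag_hom_interchange s_l s_r.
by case: b; [exact: umul_pair_unit_r | exact: umul_pair_unit_l].
Qed.

Lemma internal_subtraction_umag_trivial (T P : IUMag F)
    (p1 p2 s : hom (c := IUMag F) P M) (z : hom (c := IUMag F) T M) :
  is_terminal T -> is_product p1 p2 -> subtraction_laws p1 p2 s z b ->
  eps = cat_id M.
Proof.
move=> T_terminal P_product laws.
have [t _] := T_terminal M.
have zt : umh (z ⊙ t) = eps := umag_hom_through_terminal t z T_terminal.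
have [h [[h1 h2] _]] := P_product _ (umag_pr1 M M) (umag_pr2 M M).
have law (f g r : IUMagHom M M) :
    (forall k, p1 ⊙ k = f -> p2 ⊙ k = g -> s ⊙ k = r) ->
    umh (umag_comp s h) ⊙ fc_pair F f g = r.
  move=> s_k; rewrite -(s_k (h ⊙ umag_pair f g)) ?comp_assoc //.
    by rewrite h1; exact: umag_pr1_pair.
  by rewrite h2; exact: umag_pr2_pair.
have s_if (x y : IUMagHom M M) :
    umh (if b then x else y) = if b then umh x else umh y by case: b.
have [s_diag [s_l s_r]] := laws t.
apply: (umag_subtraction_trivial (s := umag_comp s h));
  rewrite -zt -[cat_id M]/(umh (umag_id M)) -?s_if.
- exact: (law _ _ _ s_diag).
- exact: (law _ _ _ s_l).
- exact: (law _ _ _ s_r).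
Qed.

End InternalSubtraction.

End UnitaryMagmas.

Section LoopContraction.
Local Open Scope classical_set_scope.
Local Open Scope ring_scope.

Lemma continuous2_comp (T X Y Z : topologicalType) (h : X -> Y -> Z)
    (f : T -> X) (g : T -> Y) :
  continuous (fun q : X * Y => h q.1 q.2) -> continuous f -> continuous g ->
  continuous (fun x => h (f x) (g x)).
Proof.
move=> hc fc gc x.
by apply: continuous2_cvg; [exact: (hc (f x, g x)) | exact: fc | exact: gc].
Qed.

Lemma within_continuous_comp_within (T U V : topologicalType) (S : set T) (I : set U)
    (f : T -> U) (g : U -> V) :
  continuous f -> (forall x, S x -> I (f x)) -> {within I, continuous g} ->
  {within S, continuous (g \o f)}.
Proof.
move=> fc SI /subspace_continuousP gc; apply/subspace_continuousP => x Sx.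
apply: (cvg_trans _ (gc _ (SI _ Sx))).
change (g @ (f @ within S (nbhs x)) --> g @ within I (nbhs (f x))).
apply: cvg_app => A IA; change (nbhs x (fun y => S y -> A (f y))).
have fIA : nbhs x (fun y => I (f y) -> A (f y)) := fc x _ IA.
by apply: filterS fIA => y IAy Sy; exact: IAy (SI _ Sy).
Qed.

Lemma unit_interval_mul (t u : Rdefinitions.R) :
  unit_interval t -> unit_interval u -> unit_interval (t * u).
Proof.
rewrite /unit_interval /= !in_itv /= => /andP[t0 t1] /andP[u0 u1].
by rewrite mulr_ge0 //= mulr_ile1.
Qed.

Lemma pi1_trivial_of_subtraction (X : topologicalType) (s : X -> X -> X) (z : X) :
  continuous (fun q : X * X => s q.1 q.2) ->
  (forall x, s x x = z) -> (forall x, s x z = x) -> (forall x, s z x = z) ->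
  pi1_trivial z.
Proof.
move=> sc s_xx s_x0 s_0x g [gc [g0 g1]].
exists (fun q => s (g q.1) (g (q.1 * q.2))); split; last split; last split.
- apply: (@continuous2_comp (subspace _) _ _ _ _ (g \o fst) (g \o (fun q => q.1 * q.2)))
    => //.
  + apply: within_continuous_comp_within gc => //; first by move=> q; exact: cvg_fst.
    by move=> q [].
  + apply: within_continuous_comp_within gc => //; first exact: mul_continuous.
    by move=> q [/= ? ?]; exact: unit_interval_mul.
- by move=> t _ /=; rewrite mulr0 g0 s_x0.
- by move=> t _ /=; rewrite mulr1 s_xx.
- by move=> u _ /=; rewrite mul0r mul1r g0 g1 s_0x.
Qed.

End LoopContraction.

Theorem mainTheorem16 :
  (forall (E : Category) (F : FinComplete E) (M : IUMagma F),
      @has_internal_opimplicative_subtraction (IUMag F) M ->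
      cat_isomorphic (umc M) (fc_one F)) /\
  (forall (E : Category) (F : FinComplete E) (M : IUMagma F),
      @has_internal_implicative_opsubtraction (IUMag F) M ->
      cat_isomorphic (umc M) (fc_one F)) /\
  (forall (X : topologicalType) (s : X -> X -> X) (z : X),
      continuous (fun q : X * X => s q.1 q.2) ->
      (forall x, s x x = z) -> (forall x, s x z = x) -> (forall x, s z x = z) ->
      pi1_trivial z) /\
  (forall (X : topologicalType) (s : X -> X -> X) (z : X),
      continuous (fun q : X * X => s q.1 q.2) ->
      (forall x, s x x = z) -> (forall x, s z x = x) -> (forall x, s x z = z) ->
      pi1_trivial z) /\
  (forall (X : topologicalType) (p : X -> X -> X -> X),
      continuous (fun q : X * X * X => p q.1.1 q.1.2 q.2) ->
      (forall x y, p x y y = x) -> (forall x y, p y y x = x) ->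
      (forall x y, p x y x = x) ->
      forall x0 : X, pi1_trivial x0).
Proof.
split; [|split; [|split; [|split]]].
- move=> E F M [T [P [p1 [p2 [s [z [T_terminal [P_product laws]]]]]]]].
  exact/iso_one_of_point/(internal_subtraction_umag_trivial T_terminal P_product laws).
- move=> E F M [T [P [p1 [p2 [s [z [T_terminal [P_product laws]]]]]]]].
  exact/iso_one_of_point/(internal_subtraction_umag_trivial T_terminal P_product laws).
- exact: pi1_trivial_of_subtraction.
- move=> X s z sc s_xx s_0x s_x0.
  apply: (@pi1_trivial_of_subtraction X (fun a b => s b a)) => //.
  by apply: continuous2_comp sc _ _ => q; [exact: cvg_snd | exact: cvg_fst].
- move=> X p pc p_xyy p_yyx p_xyx x0.
  apply: (@pi1_trivial_of_subtraction X (fun a b => p a b x0)) => //.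
  by apply: (@continuous2_comp _ _ _ _ (fun ab c => p ab.1 ab.2 c) id) => // q;
    [exact: cvg_id | exact: cvg_cst].
Qed.
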